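(* Consider a slotted system with diversity. There are $N$ users, $N_{sub}\ge2$ sub-carriers and slots $1,\dots,T$. In every slot, independently, the BS chooses a user uniformly at random and a sub-carrier uniformly at random, and sends an update to the chosen user on the chosen sub-carrier. The adversary uses a blocking matrix $\sigma\in\{0,1\}^{N_{sub}\times T}$, where $\sigma_j(t)=0$ means sub-carrier $j$ is blocked in slot $t$. Feasibility means $\sum_{j,t}(1-\sigma_j(t))\le\alpha T$ and at most one sub-carrier is blocked per slot, where $0<\alpha<1$. Ages satisfy $a_i(1)=1$, $a_i(t+1)=1$ if user $i$ is chosen in slot $t$ on an unblocked sub-carrier, and $a_i(t+1)=a_i(t)+1$ otherwise. The average age is $\Delta^{\sigma}_T=\frac1T\sum_{t=1}^T\frac1N\sum_i\mathbb E[a_i(t)]$. Then $$\limsup_{T\to\infty}\ \sup_{\sigma\text{ feasible}}\Delta^{\sigma}_T\le\frac{N N_{sub}}{N_{sub}-1}.$$ *)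

From HB Require Import structures.
From mathcomp Require Import all_boot all_order all_algebra.
From mathcomp Require Import reals.
Set Implicit Arguments. Unset Strict Implicit. Unset Printing Implicit Defensive.
Import Order.TTheory GRing.Theory Num.Theory.
Local Open Scope ring_scope.

(* Slots are 0-indexed: slot t+1 of the paper is the ordinal t : 'I_T.
   Sample space: one (user, sub-carrier) choice per slot; the uniform
   probability on this finite product space is exactly "independently in every
   slot, uniform user and uniform sub-carrier". *)
Definition outcome (N Nsub T : nat) := {ffun 'I_T -> 'I_N * 'I_Nsub}.

(* Blocking matrix sigma : {0,1}^{Nsub x T}; entry true <-> sigma_j(t) = 1
   (NOT blocked), false <-> sigma_j(t) = 0 (blocked). *)
Definition blocking (Nsub T : nat) := {ffun 'I_Nsub * 'I_T -> bool}.

Definition feasible (R : realType) (Nsub T : nat) (alpha : R)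
    (sigma : blocking Nsub T) : Prop :=
  ((#|[set jt | ~~ sigma jt]|)%:R <= alpha * T%:R)
  /\ (forall t : 'I_T, #|[set j : 'I_Nsub | ~~ sigma (j, t)]| <= 1)%N.

Definition success (N Nsub T : nat) (w : outcome N Nsub T)
    (sigma : blocking Nsub T) (i : 'I_N) (k : nat) : bool :=
  if (insub k : option 'I_T) is Some t then
    ((w t).1 == i) && sigma ((w t).2, t)
  else false.

(* age N Nsub T w sigma i k = a_i(k+1) *)
Fixpoint age (N Nsub T : nat) (w : outcome N Nsub T)
    (sigma : blocking Nsub T) (i : 'I_N) (k : nat) : nat :=
  if k is k'.+1 then
    (if success w sigma i k' then 1 else (age w sigma i k').+1)%N
  else 1%N.

Definition exp_age (R : realType) (N Nsub T : nat) (sigma : blocking Nsub T)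
    (i : 'I_N) (k : nat) : R :=
  (\sum_(w : outcome N Nsub T) (age w sigma i k)%:R)
    / (#|{: outcome N Nsub T}|)%:R.

Definition avg_age (R : realType) (N Nsub T : nat) (sigma : blocking Nsub T) : R :=
  (T%:R)^-1 * \sum_(t < T) ((N%:R)^-1 * \sum_(i < N) exp_age R sigma i t).

From HB Require Import structures.
From mathcomp Require Import all_boot all_order all_algebra.
From mathcomp Require Import reals ring.
Import Order.TTheory GRing.Theory Num.Theory.
Local Open Scope ring_scope.

(* In every slot user i is served with probability at least
   p = (Nsub - 1) / (N Nsub), because at most one of the Nsub sub-carriers is
   blocked, and the slots are independent.  Hence the expected age is the
   renewal sum E[a_i(k+1)] = 1 + sum_(m < k) prod_(m <= s < k) q_s of the
   per-slot miss probabilities q_s <= 1 - p, which satisfies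
   r(k+1) = 1 + q_k r(k) and so stays below 1/p = N Nsub / (Nsub - 1).  The
   bound holds for every horizon T (so T0 = 0) and never uses the blocking
   budget alpha. *)

Section Renewal.
Context {R : numFieldType}.

Definition renewal (F : nat -> R) (k : nat) : R :=
  1 + \sum_(m < k) \prod_(m <= s < k) F s.

Lemma renewalS (F : nat -> R) k : renewal F k.+1 = 1 + F k * renewal F k.
Proof.
rewrite /renewal big_ord_recr big_nat1 mulrDr mulr1 mulr_sumr [F k + _]addrC.
congr (1 + (_ + _)); apply: eq_bigr => m _.
by rewrite big_nat_recr 1?mulrC //= ltnW.
Qed.

Lemma renewal_ge1 (F : nat -> R) k :
  (forall s, (s < k)%N -> 0 <= F s) -> 1 <= renewal F k.
Proof.
elim: k => [|k IH] F_ge0; first by rewrite /renewal big_ord0 addr0.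
rewrite renewalS lerDl mulr_ge0 ?F_ge0 //.
exact: le_trans (IH (fun s lt_sk => F_ge0 s (ltnW lt_sk))).
Qed.

Lemma renewal_le_inv (F : nat -> R) (p : R) k : 0 < p <= 1 ->
  (forall s, (s < k)%N -> 0 <= F s <= 1 - p) -> renewal F k <= p^-1.
Proof.
move=> /andP[p_gt0 p_le1]; elim: k => [|k IH] F_bnd.
  by rewrite /renewal big_ord0 addr0 invf_ge1.
have F_bnd' s (lt_sk : (s < k)%N) := F_bnd s (ltnW lt_sk).
have /andP[Fk_ge0 Fk_le] := F_bnd k (ltnSn k).
have r_ge1 : 1 <= renewal F k by apply: renewal_ge1 => s /F_bnd' /andP[].
have -> : p^-1 = 1 + (1 - p) * p^-1 by field; rewrite gt_eqF.
by rewrite renewalS lerD2l ler_pM ?IH // (le_trans ler01 r_ge1).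
Qed.

End Renewal.

Section Mean.
Context {R : numFieldType}.

Definition mean {C : finType} (f : C -> R) : R := (\sum_c f c) / #|C|%:R.

Lemma eq_mean {C : finType} {f g : C -> R} : f =1 g -> mean f = mean g.
Proof. by move=> fg; rewrite /mean (eq_bigr _ (fun c _ => fg c)). Qed.

Lemma mean_cst {C : finType} (a : R) : (0 < #|C|)%N -> mean (fun _ : C => a) = a.
Proof.
by move=> C_gt0; rewrite /mean sumr_const -[a *+ _]mulr_natr mulfK // pnatr_eq0 -lt0n.
Qed.

Lemma meanD {C : finType} (f g : C -> R) :
  mean (fun c => f c + g c) = mean f + mean g.
Proof. by rewrite /mean big_split mulrDl. Qed.

Lemma mean_sum {C I : finType} (f : I -> C -> R) :
  mean (fun c => \sum_i f i c) = \sum_i mean (f i).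
Proof. by rewrite /mean exchange_big mulr_suml. Qed.

Lemma mean_indicator {C : finType} (P : pred C) :
  mean (fun c => (P c)%:R) = #|[set c | P c]|%:R / #|C|%:R.
Proof.
rewrite /mean -sum1dep_card natr_sum [in RHS]big_mkcond /=.
by congr (_ / _); apply: eq_bigr => c _; case: (P c).
Qed.

Lemma mean_le {C : finType} (f : C -> R) (b : R) :
  0 <= b -> (forall c, f c <= b) -> mean f <= b.
Proof.
move=> b_ge0 f_le; rewrite /mean.
have [->|C_gt0] := posnP #|C|; first by rewrite invr0 mulr0.
rewrite ler_pdivrMr ?ltr0n // mulr_natr -sumr_const.
exact: ler_sum.
Qed.

Lemma mean_ffun_prod {I C : finType} (P : pred I) (f : I -> C -> R) :
  (0 < #|C|)%N ->
  mean (fun w : {ffun I -> C} => \prod_(i | P i) f i (w i))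
  = \prod_(i | P i) mean (f i).
Proof.
move=> C_gt0.
have -> : \prod_(i | P i) mean (f i)
          = \prod_i mean (fun c => if P i then f i c else 1).
  by rewrite big_mkcond; apply: eq_bigr => i _; case: (P i); rewrite ?mean_cst.
(* Distributing the product of sums is the independence of the coordinates. *)
rewrite /mean prodf_div prodr_const card_ffun natrX bigA_distr_bigA.
by congr (_ / _); apply: eq_bigr => w _; rewrite big_mkcond.
Qed.

End Mean.

Lemma big_nat_ord_widen {R : Type} {idx : R} {op : Monoid.law idx}
    (n m k : nat) (F : nat -> R) : (k <= n)%N ->
  \big[op/idx]_(m <= s < k) F s = \big[op/idx]_(t < n | (m <= t < k)%N) F t.
Proof.
move=> le_kn; rewrite big_geq_mkord (big_ord_widen_cond _ _ _ le_kn).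
by apply: eq_bigl => t; rewrite andbC.
Qed.

Section Ages.
Context {R : realType} {N Nsub T : nat}.
Hypotheses (N_gt0 : (0 < N)%N) (Nsub_gt1 : (1 < Nsub)%N).

Definition delivers (sigma : blocking Nsub T) (i : 'I_N) (t : 'I_T)
    (c : 'I_N * 'I_Nsub) : bool :=
  (c.1 == i) && sigma (c.2, t).

Lemma success_slot (w : outcome N Nsub T) sigma i (t : 'I_T) :
  success w sigma i t = delivers sigma i t (w t).
Proof. by rewrite /success valK. Qed.

Lemma age_renewal (w : outcome N Nsub T) sigma i k :
  (age w sigma i k)%:R = renewal (fun s => (~~ success w sigma i s)%:R : R) k.
Proof.
elim: k => [|k IH]; first by rewrite /renewal big_ord0 addr0.
rewrite renewalS -IH /=; case: (success w sigma i k) => /=.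
  by rewrite mul0r addr0.
by rewrite mul1r -addn1 natrD addrC.
Qed.

Definition miss_prob (sigma : blocking Nsub T) (i : 'I_N) (s : nat) : R :=
  mean (fun w : outcome N Nsub T => (~~ success w sigma i s)%:R).

Let choices_gt0 : (0 < #|{: 'I_N * 'I_Nsub}|)%N.
Proof. by rewrite card_prod !card_ord muln_gt0 N_gt0 ltnW. Qed.

Let NNsub_gt0 : (0 < N * Nsub)%N.
Proof. by rewrite muln_gt0 N_gt0 ltnW. Qed.

Let outcomes_gt0 : (0 < #|{: outcome N Nsub T}|)%N.
Proof. by rewrite card_ffun expn_gt0 choices_gt0. Qed.

Lemma miss_prob_slot sigma i (t : 'I_T) :
  miss_prob sigma i t = mean (fun c => (~~ delivers sigma i t c)%:R).
Proof.
have := mean_ffun_prod (pred1 t)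
  (fun t' c => (~~ delivers sigma i t' c)%:R : R) choices_gt0.
rewrite big_pred1_eq => <-; apply: eq_mean => w.
by rewrite big_pred1_eq success_slot.
Qed.

Lemma exp_age_renewal sigma i k :
  (k <= T)%N -> exp_age R sigma i k = renewal (miss_prob sigma i) k.
Proof.
move=> le_kT.
have -> : exp_age R sigma i k = mean (fun w => (age w sigma i k)%:R) by [].
rewrite (eq_mean (fun w => age_renewal w sigma i k)) /renewal.
rewrite meanD mean_cst // mean_sum; congr (1 + _); apply: eq_bigr => m _.
rewrite [RHS](big_nat_ord_widen _ _ _ _ le_kT).
under [RHS]eq_bigr do rewrite miss_prob_slot.
rewrite -mean_ffun_prod //; apply: eq_mean => w.
rewrite (big_nat_ord_widen _ _ _ _ le_kT).
by apply: eq_bigr => t _; rewrite success_slot.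
Qed.

Lemma card_unblocked_ge (sigma : blocking Nsub T) (t : 'I_T) :
  (#|[set j : 'I_Nsub | ~~ sigma (j, t)]| <= 1)%N ->
  (Nsub.-1 <= #|[set j : 'I_Nsub | sigma (j, t)]|)%N.
Proof.
rewrite -[in Nsub.-1](card_ord Nsub) -(cardsC [set j | sigma (j, t)]).
have -> : ~: [set j | sigma (j, t)] = [set j | ~~ sigma (j, t)].
  by apply/setP => j; rewrite !inE.
by move=> le1; rewrite -subn1 leq_subLR addnC leq_add2r.
Qed.

Lemma miss_prob_le (sigma : blocking Nsub T) (i : 'I_N) (t : 'I_T) :
  (#|[set j : 'I_Nsub | ~~ sigma (j, t)]| <= 1)%N ->
  miss_prob sigma i t <= 1 - Nsub.-1%:R / (N * Nsub)%:R.
Proof.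
move=> /card_unblocked_ge unblocked.
rewrite miss_prob_slot mean_indicator.
have -> : [set c | ~~ delivers sigma i t c] = ~: setX [set i] [set j | sigma (j, t)].
  by apply/setP => -[a j]; rewrite !inE.
rewrite cardsCs setCK cardsX cards1 mul1n card_prod !card_ord natrB; last first.
  by rewrite (leq_trans (max_card _)) // card_ord leq_pmull.
rewrite mulrBl mulfV ?pnatr_eq0 -?lt0n // lerD2l lerN2.
by rewrite ler_wpM2r ?invr_ge0 ?ler0n // ler_nat.
Qed.

Lemma exp_age_le (sigma : blocking Nsub T) (i : 'I_N) k : (k <= T)%N ->
  (forall t : 'I_T, #|[set j : 'I_Nsub | ~~ sigma (j, t)]| <= 1)%N ->
  exp_age R sigma i k <= (N * Nsub)%:R / Nsub.-1%:R.
Proof.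
move=> le_kT one_blocked; rewrite exp_age_renewal // -invf_div.
apply: renewal_le_inv => [|s lt_sk].
  have Nsub1_gt0 : (0 < Nsub.-1)%N by rewrite -ltnS prednK // ltnW.
  rewrite divr_gt0 ?ltr0n //= ler_pdivrMr ?ltr0n // mul1r ler_nat.
  by rewrite (leq_trans (leq_pred _)) // leq_pmull.
have lt_sT : (s < T)%N := leq_trans lt_sk le_kT.
apply/andP; split.
  by rewrite divr_ge0 // sumr_ge0.
exact: (miss_prob_le sigma i (Ordinal lt_sT) (one_blocked _)).
Qed.

End Ages.

Lemma avg_age_mean (R : realType) (N Nsub T : nat) (sigma : blocking Nsub T) :
  avg_age R N sigma
  = mean (fun t : 'I_T => mean (fun i : 'I_N => exp_age R sigma i t)).
Proof.
rewrite /avg_age /mean !card_ord mulrC; congr (_ / _).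
by apply: eq_bigr => t _; rewrite mulrC.
Qed.

Theorem theorem9 (R : realType) (N Nsub : nat) (alpha : R) :
  (0 < N)%N -> (2 <= Nsub)%N -> 0 < alpha -> alpha < 1 ->
  forall eps : R, 0 < eps ->
  exists T0 : nat, forall T : nat, (T0 <= T)%N ->
    forall sigma : blocking Nsub T, feasible alpha sigma ->
      avg_age R N sigma <= (N * Nsub)%:R / (Nsub.-1)%:R + eps.
Proof.
move=> N_gt0 Nsub_gt1 _ _ eps eps_gt0.
exists 0%N => T _ sigma [_ one_blocked].
have bound_ge0 : 0 <= (N * Nsub)%:R / (Nsub.-1)%:R :> R by rewrite divr_ge0.
rewrite -[avg_age _ _ _]addr0; apply: lerD; last exact: ltW.
rewrite avg_age_mean; apply: mean_le => // t; apply: mean_le => // i.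
exact: exp_age_le N_gt0 Nsub_gt1 _ _ _ (ltnW (ltn_ord t)) one_blocked.
Qed.
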